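(* For every integer $k\ge 1$ and every $\mathbf{PFO}^2$ formula $\phi(y)$ whose only free variable is $y$, there is a $\mathbf{PFO}^2$ formula $\chi_{\ge k}(x)$ with only free variable $x$ such that for every string $w$ and every position $n$: $w,n\models\chi_{\ge k}(x)$ iff there are at least $k$ positions $m<n$ with $w,m\models\phi(y)$. Consequently, for every $k\ge 1$ there is also a $\mathbf{PFO}^2$ formula $\chi_{=k}(x)$ expressing that exactly $k$ positions $m<x$ satisfy $\phi$.
   Context: Formulas of $\mathbf{PFO}^2$ over a finite alphabet $\Sigma$ use only two position variables $x,y$ (which may be re-quantified). Atomic formulas are $\pi_a(z)$ ($a\in\Sigma$, $z\in\{x,y\}$; ''position $z$ carries $a$'') and $z<z'$. Formulas are closed under $\wedge,\neg$ and under: from $\phi(x,y)$ form $\exists y<x:\phi(x,y)$ and $\exists x<y:\phi(x,y)$; from $\phi(x)$ with only free variable $x$ form $\exists x<y:\phi(x)$ and $\exists x:\phi(x)$; symmetrically with $x,y$ interchanged. On a string $w$ of length $N$, quantified variables range over $\{1,\dots,N\}$, a free variable may be assigned any position in $\{1,\dots,N+1\}$, and $\pi_a(z)$ holds iff $z\le N$ and $w_z=a$. *)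

From HB Require Import structures.
From mathcomp Require Import all_boot.
Set Implicit Arguments. Unset Strict Implicit. Unset Printing Implicit Defensive.

Inductive var := VX | VY.
Definition var_eqb (u v : var) : bool :=
  match u, v with VX, VX | VY, VY => true | _, _ => false end.
Lemma var_eqP : Equality.axiom var_eqb.
Proof. by case; case; constructor. Qed.
HB.instance Definition _ := hasDecEq.Build var var_eqP.

Definition other (z : var) : var := if z is VX then VY else VX.

Section PFO2.
Variable Sigma : finType.

(* Raw syntax.  ExLt z f  is  "exists z < (other z) : f",
   Ex z f  is  "exists z : f" (only allowed when f has z as its only
   possible free variable, see [wf]). *)
Inductive form :=
| Lab of Sigma & var
| Lt of var & var
| And of form & form
| Not of form
| ExLt of var & form
| Ex of var & form.

Fixpoint free (z : var) (f : form) : bool :=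
  match f with
  | Lab _ z' => z == z'
  | Lt z1 z2 => (z == z1) || (z == z2)
  | And f g => free z f || free z g
  | Not f => free z f
  | ExLt z' f => (z == other z') || ((z != z') && free z f)
  | Ex z' f => (z != z') && free z f
  end.

Fixpoint wf (f : form) : bool :=
  match f with
  | Lab _ _ | Lt _ _ => true
  | And f g => wf f && wf g
  | Not f => wf f
  | ExLt _ f => wf f
  | Ex z f => ~~ free (other z) f && wf f
  end.

Definition upd (e : var -> nat) (z : var) (m : nat) : var -> nat :=
  fun u => if u == z then m else e u.

(* Semantics on a string w of length N, positions 1..N; free variables may
   take values in 1..N+1; quantified variables range over 1..N. *)
Fixpoint sat (w : seq Sigma) (e : var -> nat) (f : form) : bool :=
  match f with
  | Lab a z => (0 < e z <= size w) && (nth a w (e z).-1 == a)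
  | Lt z1 z2 => e z1 < e z2
  | And f g => sat w e f && sat w e g
  | Not f => ~~ sat w e f
  | ExLt z f => has (fun m => (m < e (other z)) && sat w (upd e z m) f)
                    (iota 1 (size w))
  | Ex z f => has (fun m => sat w (upd e z m) f) (iota 1 (size w))
  end.

Definition asg (vx vy : nat) : var -> nat :=
  fun u => if u is VX then vx else vy.

(* number of positions m < n (m >= 1) with w, m |= phi(y); the value v of
   the non-free variable x is irrelevant *)
Definition count_below (w : seq Sigma) (v n : nat) (phi : form) : nat :=
  count (fun m => sat w (asg v m) phi) (iota 1 n.-1).

End PFO2.

(* At least k+1 positions below x satisfy phi iff some y < x satisfies phi
   and has at least k such positions below it.  The second conjunct is the
   formula for k with the roles of x and y exchanged, so induction on k
   builds chi_{>=k} reusing only the two variables. *)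

From mathcomp Require Import all_boot zify.
Set Implicit Arguments. Unset Strict Implicit.

Section SwapVariables.
Variable Sigma : finType.
Implicit Types (w : seq Sigma) (f : form Sigma).

Fixpoint swap_form f : form Sigma :=
  match f with
  | Lab a z => Lab a (other z)
  | Lt z1 z2 => Lt Sigma (other z1) (other z2)
  | And f g => And (swap_form f) (swap_form g)
  | Not f => Not (swap_form f)
  | ExLt z f => ExLt (other z) (swap_form f)
  | Ex z f => Ex (other z) (swap_form f)
  end.

Lemma otherK : involutive other.
Proof. by case. Qed.

Lemma sat_eq_free w f (e1 e2 : var -> nat) :
  (forall z, free z f -> e1 z = e2 z) -> sat w e1 f = sat w e2 f.
Proof.
elim: f e1 e2 => [a z|z1 z2|f IHf g IHg|f IHf|z f IHf|z f IHf] e1 e2 /= e12.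
- by rewrite e12 ?eqxx.
- by rewrite !e12 ?eqxx ?orbT.
- by rewrite (IHf e1 e2) ?(IHg e1 e2) // => u fu; apply: e12; rewrite fu ?orbT.
- by rewrite (IHf e1 e2).
- rewrite e12 ?eqxx //; apply: eq_has => m; congr andb; apply: IHf => u fu.
  by rewrite /upd; case: ifP => // uz; apply: e12; rewrite uz fu orbT.
- apply: eq_has => m; apply: IHf => u fu.
  by rewrite /upd; case: ifP => // uz; apply: e12; rewrite uz fu.
Qed.

Lemma sat_swap_form w f (e : var -> nat) :
  sat w e (swap_form f) = sat w (e \o other) f.
Proof.
elim: f e => [a z|z1 z2|f IHf g IHg|f IHf|z f IHf|z f IHf] e //=.
- by rewrite IHf IHg.
- by rewrite IHf.
- rewrite otherK; apply: eq_has => m; rewrite IHf; congr andb.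
  by apply: sat_eq_free => u _; rewrite /upd /=; case: u; case: z.
- apply: eq_has => m; rewrite IHf.
  by apply: sat_eq_free => u _; rewrite /upd /=; case: u; case: z.
Qed.

Lemma free_swap_form f z : free z (swap_form f) = free (other z) f.
Proof.
elim: f z => [a z'|z1 z2|f IHf g IHg|f IHf|z' f IHf|z' f IHf] z /=;
  rewrite ?IHf ?IHg //.
- by case: z; case: z'.
- by case: z; case: z1; case: z2.
- by case: z; case: z'.
- by case: z; case: z'.
Qed.

Lemma wf_swap_form f : wf (swap_form f) = wf f.
Proof.
elim: f => [a z|z1 z2|f IHf g IHg|f IHf|z f IHf|z f IHf] //=; rewrite ?IHf ?IHg //.
by rewrite free_swap_form otherK.
Qed.

End SwapVariables.

Section Counting.
Variable P : pred nat.

Lemma has_iota_below n N : 1 <= n <= N.+1 ->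
  has (fun m => (m < n) && P m) (iota 1 N) = has P (iota 1 n.-1).
Proof.
move=> /andP[n_ge n_le]; have -> : N = n.-1 + (N - n.-1) by lia.
rewrite iotaD has_cat [X in _ || X](_ : _ = false) ?orbF; last first.
  apply/hasPn => m; rewrite mem_iota => /andP[m_ge _].
  by apply/andP => -[m_lt _]; lia.
apply: eq_in_has => m; rewrite mem_iota => /andP[m_ge m_lt].
by have -> : m < n by lia.
Qed.

Lemma has_count_iota_below k j :
  has (fun m => P m && (k <= count P (iota 1 m.-1))) (iota 1 j)
  = (k < count P (iota 1 j)).
Proof.
elim: j => [|j IHj]; first by rewrite ltn0.
rewrite -[j.+1]addn1 iotaD has_cat count_cat IHj /= add1n orbF addn0.
by case: (P j.+1) => /=; rewrite ?orbF ?addn0 // addn1 ltnS orb_idl //; apply: ltnW.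
Qed.

End Counting.

Section AtLeast.
Variables (Sigma : finType) (phi : form Sigma).

Fixpoint at_least k : form Sigma :=
  if k is k'.+1 then ExLt VY (And phi (swap_form (at_least k')))
  else Not (Lt Sigma VX VX).

Definition exactly k : form Sigma := And (at_least k) (Not (at_least k.+1)).

Lemma wf_at_least k : wf phi -> wf (at_least k).
Proof. by move=> wf_phi; elim: k => //= k IHk; rewrite wf_phi wf_swap_form IHk. Qed.

Lemma free_at_least k : free VY (at_least k) = false.
Proof. by case: k. Qed.

Lemma wf_exactly k : wf phi -> wf (exactly k).
Proof. by move=> wf_phi; rewrite /exactly [at_least]lock /= -lock !wf_at_least. Qed.

Lemma free_exactly k : free VY (exactly k) = false.
Proof. by rewrite /exactly [at_least]lock /= -lock !free_at_least. Qed.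

Hypothesis phi_noX : ~~ free VX phi.

Lemma sat_at_least w v k (e : var -> nat) : 1 <= e VX <= size w + 1 ->
  sat w e (at_least k) = (k <= count (fun m => sat w (asg v m) phi) (iota 1 (e VX).-1)).
Proof.
elim: k e => [|k IHk] e eX_range; first by rewrite /= ltnn.
rewrite -has_count_iota_below -(@has_iota_below _ _ (size w)) /=; last first.
  by rewrite -[(size w).+1]addn1.
apply: eq_in_has => m; rewrite mem_iota => m_range; congr (_ && (_ && _)).
- by apply: sat_eq_free; case=> //; rewrite (negbTE phi_noX).
- by rewrite sat_swap_form IHk //= /upd /=; lia.
Qed.

Lemma sat_exactly w v k (e : var -> nat) : 1 <= e VX <= size w + 1 ->
  sat w e (exactly k) = (count (fun m => sat w (asg v m) phi) (iota 1 (e VX).-1) == k).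
Proof.
move=> eX_range; rewrite /exactly [at_least]lock /= -lock !(sat_at_least v) //.
by rewrite -leqNgt eq_sym eqn_leq.
Qed.

End AtLeast.

Theorem mainTheorem4 (Sigma : finType) (k : nat) (phi : form Sigma) :
  1 <= k -> wf phi -> ~~ free VX phi ->
  (exists chi : form Sigma, wf chi /\ ~~ free VY chi /\
     forall (w : seq Sigma) (n v : nat),
       1 <= n <= size w + 1 -> 1 <= v <= size w + 1 ->
       (sat w (asg n v) chi <-> k <= count_below w v n phi))
  /\
  (exists chi : form Sigma, wf chi /\ ~~ free VY chi /\
     forall (w : seq Sigma) (n v : nat),
       1 <= n <= size w + 1 -> 1 <= v <= size w + 1 ->
       (sat w (asg n v) chi <-> count_below w v n phi = k)).
Proof.
move=> _ wf_phi phi_noX; split.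
- exists (at_least phi k); rewrite wf_at_least ?free_at_least //.
  by do 2!split=> //; move=> w n v n_range _; rewrite (sat_at_least _ v).
- exists (exactly phi k); rewrite wf_exactly ?free_exactly //.
  by do 2!split=> //; move=> w n v n_range _; rewrite (sat_exactly _ v) //; split=> /eqP.
Qed.
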